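(* Let $G=(V,E)$ be a connected graph, let $T$ be a spanning tree of $G$ rooted in $s$ which is an $\mathcal L$-tree of some DFS on $G$, let $\rho$ be an arbitrary vertex order of $V$ ending with $s$, and let $\sigma$ be the order output by Ordering$(G,T,s,\rho)$. Let $v,w$ be vertices with $v\prec_\sigma w$ which have the same parent in $T$ and the same neighborhood in the set $Y=\{x\in V: x\prec_\sigma v\}$. Then $v$ is to the right of $w$ in $\rho$.
   Context: Graphs are finite, simple, undirected; $N(v)$ is the neighborhood of $v$. A vertex order is a linear order $\sigma=(v_1,\dots,v_n)$ of $V$; $\sigma(i)=v_i$; $u\prec_\sigma v$ means $u$ appears before (to the left of) $v$; $\rho^-$ is the reverse of $\rho$. DFS: a search that starts at a vertex and repeatedly visits an unvisited neighbor of the most recently visited vertex that still has an unvisited neighbor. DFS$^+(\tau)$ on a graph $H$: the DFS of $H$ starting at the last vertex of $\tau$ that, whenever several vertices may be visited next, visits the one rightmost in $\tau$. $\mathcal L$-tree of a vertex order $(v_1,\dots,v_n)$: the spanning tree rooted at $v_1$ with an edge from each $v_i$ ($i>1$) to its rightmost neighbor $v_j$ with $j<i$; $T$ rooted at $s$ is an $\mathcal L$-tree of DFS on $G$ if some DFS order of $G$ starting at $s$ has $\mathcal L$-tree $T$. Refining an ordered partition $(Q_1,\dots,Q_k)$ of $V$ with $S'$ replaces each $Q_i$ by $(Q_i\cap S',Q_i\setminus S')$ whenever both are nonempty. Procedure Ordering$(G,T,s,\rho)$: let $\beta$ be the reverse of a BFS order of $T$ starting at $s$; $\mathcal Q=(V)$;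 for $i=1,\dots,n$, with $v=\beta(i)$, refine $\mathcal Q$ with $\{w\in N(v): w\prec_\beta v\}$; order the vertices inside each class of $\mathcal Q$ according to $\rho^-$ and move $\{s\}$ to the leftmost position; let $\tau$ be the reverse of the resulting order of all vertices; output $\sigma=$ DFS$^+(\tau)$ on $T$. *)

From mathcomp Require Import all_boot.
Set Implicit Arguments. Unset Strict Implicit. Unset Printing Implicit Defensive.

Section Defs.
Variable V : finType.

Definition is_vorder (sg : seq V) : Prop := uniq sg /\ forall x : V, x \in sg.

Definition prec (sg : seq V) (u v : V) : bool := index u sg < index v sg.

Definition all_visited (H : rel V) (pre : seq V) (x : V) : Prop :=
  forall y, H x y -> y \in pre.

(* sg is a DFS order of H starting at r: each vertex sg(i), i > 0, is a
   neighbor of the most recently visited vertex sg(j) still having an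
   unvisited neighbor. *)
Definition is_dfs (H : rel V) (r : V) (sg : seq V) : Prop :=
  is_vorder sg /\ head r sg = r /\
  forall i, 0 < i < size sg ->
    exists j, j < i /\ H (nth r sg j) (nth r sg i) /\
      forall k, j < k < i -> all_visited H (take i sg) (nth r sg k).

(* DFS^+(tau) on H: the DFS of H starting at the last vertex r of tau which,
   whenever several vertices may be visited next, visits the one rightmost
   in tau. *)
Definition is_dfs_plus (H : rel V) (tau : seq V) (sg : seq V) : Prop :=
  exists r : V, [/\ tau != [::], last r tau = r,
    is_vorder sg, head r sg = r &
    forall i, 0 < i < size sg ->
      exists j, [/\ j < i, H (nth r sg j) (nth r sg i),
        forall k, j < k < i -> all_visited H (take i sg) (nth r sg k) &
        forall y, H (nth r sg j) y -> y \notin take i sg ->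
          index y tau <= index (nth r sg i) tau]].

(* sg is a BFS order of H starting at r: each vertex sg(i), i > 0, is a
   neighbor of the earliest visited vertex sg(j) still having an
   unvisited neighbor. *)
Definition is_bfs (H : rel V) (r : V) (sg : seq V) : Prop :=
  is_vorder sg /\ head r sg = r /\
  forall i, 0 < i < size sg ->
    exists j, j < i /\ H (nth r sg j) (nth r sg i) /\
      forall k, k < j -> all_visited H (take i sg) (nth r sg k).

Definition Lparent (e : rel V) (sg : seq V) (x p : V) : bool :=
  [&& prec sg p x, e x p &
      [forall z, (e x z && prec sg z x) ==> (index z sg <= index p sg)]].

Definition Ltree (e : rel V) (sg : seq V) : rel V :=
  fun x y => Lparent e sg x y || Lparent e sg y x.

Definition is_Ltree_of_DFS (e t : rel V) (s : V) : Prop :=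
  exists sg0, is_dfs e s sg0 /\ forall x y, t x y = Ltree e sg0 x y.

Definition tparent (t : rel V) (s v p : V) : bool :=
  [&& v != s, t v p &
      connect (fun a b => [&& t a b, a != v & b != v]) p s].

Definition refine (S : pred V) (Q : seq (seq V)) : seq (seq V) :=
  flatten [seq (let a := [seq x <- q | S x] in
                let b := [seq x <- q | ~~ S x] in
                if (a != [::]) && (b != [::]) then [:: a; b] else [:: q])
          | q <- Q].

(* Procedure Ordering(G, T, s, rho), given the chosen BFS order bfs of T
   from s: beta = rev bfs; returns tau (the order on which DFS^+ is run). *)
Definition ordering_tau (e : rel V) (s : V) (rho bfs : seq V) : seq V :=
  let beta := rev bfs in
  let Q := foldl (fun Q v => refine (fun w => e v w && prec beta w v) Q)
                 [:: enum V] beta in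
  (* within each class: order according to rho^- *)
  let Qs := [seq sort (fun x y => index y rho <= index x rho) q | q <- Q] in
  let ord := s :: [seq x <- flatten Qs | x != s] in
  rev ord.

Definition ordering_output (e t : rel V) (s : V) (rho sg : seq V) : Prop :=
  exists bfs, is_bfs t s bfs /\ is_dfs_plus t (ordering_tau e s rho bfs) sg.
End Defs.

From mathcomp Require Import all_boot zify.
Set Implicit Arguments. Unset Strict Implicit. Unset Printing Implicit Defensive.

(** Let P be the child-to-parent relation of T.  Since T is the L-tree of a
    DFS of G, every edge of G joins a vertex to one of its P-ancestors, and
    both the BFS order of T and the DFS^+ order sigma list every vertex after
    its ancestors.  Hence a neighbour x of v that precedes v in the BFS order is
    an ancestor of the common parent p of v and w, so x precedes v in sigma
    and, by hypothesis, is also a neighbour of w preceding w in the BFS order.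
    Thus no refinement step of Ordering separates v from w: they end in one
    class, inside which tau follows rho.  When DFS^+(tau) enters v from p, the
    child w of p is still unvisited, so w is not to the right of v in tau;
    hence w precedes v in rho. *)

Lemma perm_flatten_map (T : eqType) (f : seq T -> seq T) (Q : seq (seq T)) :
  (forall q, perm_eq (f q) q) -> perm_eq (flatten (map f Q)) (flatten Q).
Proof. by move=> fP; elim: Q => //= q Q IH; apply: perm_cat. Qed.

Lemma subseq_flatten (T : eqType) (q : seq T) (Q : seq (seq T)) :
  q \in Q -> subseq q (flatten Q).
Proof.
elim: Q => //= q' Q IH; rewrite in_cons => /predU1P[-> | /IH qQ].
  exact: prefix_subseq.
exact: subseq_trans qQ (suffix_subseq _ _).
Qed.

Section Precedence.
Variable V : finType.
Implicit Types (l : seq V) (x y z : V).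

Lemma prec_neq l x y : prec l x y -> x != y.
Proof. by apply: contraTneq => ->; rewrite /prec ltnn. Qed.

Lemma leq_index_prec l x y :
  x \in l -> y \in l -> x != y -> index x l <= index y l -> prec l x y.
Proof.
move=> xl yl xy le_xy; rewrite /prec ltn_neqAle le_xy andbT.
by apply: contra xy => /eqP/(index_inj x xl yl)->.
Qed.

Lemma prec_cons z l x y : z != x -> z != y -> prec (z :: l) x y = prec l x y.
Proof. by rewrite /prec /= => /negbTE-> /negbTE->. Qed.

Lemma prec_filter (a : pred V) l x y : a x -> a y -> prec (filter a l) x y = prec l x y.
Proof.
move=> ax ay; elim: l => //= z l IH.
case az: (a z).
  by rewrite /prec /=; case: eqP; case: eqP => //= _ _; rewrite ltnS.
have zx : z != x by apply: contraFneq az => ->.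
have zy : z != y by apply: contraFneq az => ->.
by rewrite prec_cons.
Qed.

Lemma subseq_prec l1 l2 x y :
  uniq l2 -> subseq l1 l2 -> x \in l1 -> y \in l1 -> prec l1 x y = prec l2 x y.
Proof. by move=> u2 /(subseq_uniqP u2) E xl yl; rewrite {1}E prec_filter. Qed.

Lemma index_rev l x : uniq l -> x \in l -> index x (rev l) = size l - (index x l).+1.
Proof.
move=> ul xl; have lt_xl : index x l < size l by rewrite index_mem.
rewrite -[in LHS](nth_index x xl).
have <- : nth x (rev l) (size l - (index x l).+1) = nth x l (index x l).
  by rewrite nth_rev; [congr nth; lia | lia].
by rewrite index_uniq // ?rev_uniq // size_rev ltn_subrL (leq_ltn_trans _ lt_xl).
Qed.

Lemma prec_rev l x y : uniq l -> x \in l -> y \in l -> prec (rev l) x y = prec l y x.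
Proof.
move=> ul xl yl; rewrite /prec !index_rev //.
have : index x l < size l by rewrite index_mem.
have : index y l < size l by rewrite index_mem.
lia.
Qed.

End Precedence.

Lemma connect_rank_leq (T : finType) (P : rel T) (f : T -> nat) :
  (forall x y, P x y -> f y < f x) -> forall x y, connect P x y -> f y <= f x.
Proof.
move=> Pf x y /connectP[q Pq ->]; elim: q x Pq => //= z q IH x /andP[Pxz Pq].
exact: leq_trans (IH _ Pq) (ltnW (Pf _ _ Pxz)).
Qed.

Lemma connect_first_step (T : finType) (P : rel T) x y :
  connect P x y -> x != y -> exists2 z, P x z & connect P z y.
Proof.
move=> /connectP[[|z q] /=]; first by move=> _ ->; rewrite eqxx.
by case/andP=> Pxz Pq -> _; exists z => //; apply/connectP; exists q.
Qed.

Definition search_order (V : finType) (H : rel V) (r : V) (sg : seq V) : Prop :=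
  [/\ is_vorder sg, head r sg = r &
      forall i, 0 < i < size sg -> exists2 j, j < i & H (nth r sg j) (nth r sg i)].

Definition parents_first (V : finType) (P : rel V) (sg : seq V) : Prop :=
  forall x y, P x y -> prec sg y x.

Lemma bfs_search_order (V : finType) (H : rel V) r sg :
  is_bfs H r sg -> search_order H r sg.
Proof.
case=> ord [hd step]; split=> // i /step[j [ji [Hji _]]]; by exists j.
Qed.

Lemma dfs_plus_rooted (V : finType) (H : rel V) s tau sg :
  is_dfs_plus H tau sg -> last s tau = s ->
  [/\ is_vorder sg, head s sg = s &
    forall i, 0 < i < size sg ->
      exists j, [/\ j < i, H (nth s sg j) (nth s sg i),
        forall k, j < k < i -> all_visited H (take i sg) (nth s sg k) &
        forall y, H (nth s sg j) y -> y \notin take i sg ->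
          index y tau <= index (nth s sg i) tau]].
Proof.
case=> r [tau0 last_r ord hd step] last_s.
suff -> : s = r by [].
by rewrite -last_s -[RHS]last_r; move: tau0; case: (tau).
Qed.

Lemma dfs_plus_search_order (V : finType) (H : rel V) s tau sg :
  is_dfs_plus H tau sg -> last s tau = s -> search_order H s sg.
Proof.
move=> /dfs_plus_rooted/[apply] -[ord hd step].
by split=> // i /step[j [ji Hji _ _]]; exists j.
Qed.

Definition parent_relation (V : finType) (t : rel V) (s : V) (P : rel V) : Prop :=
  [/\ forall x y z, P x y -> P x z -> y = z, forall y, ~~ P s y &
      forall x y, t x y = P x y || P y x].

Section ParentRelation.
Variables (V : finType) (t P : rel V) (s : V).
Hypothesis tP : parent_relation t s P.

Lemma parent_neq_root v p : P v p -> v != s.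
Proof. by have [_ P_root _] := tP; apply: contraTneq => ->; apply: P_root. Qed.

Lemma tparent_parent v p : tparent t s v p -> P v p.
Proof.
have [P_functional P_root tE] := tP.
case/and3P=> vs; rewrite tE => /orP[// | Ppv] ps.
set R := fun a b => [&& t a b, a != v & b != v] in ps.
have R_sym : connect_sym R.
  apply: sym_connect_sym => a b; rewrite /R [t a b]tE [t b a]tE orbC.
  by rewrite [(a != v) && _]andbC.
have below_v_closed : closed R [pred a | connect P a v].
  apply: (intro_closed R_sym) => a b /and3P[].
  rewrite tE => /orP[Pab | Pba] av bv av_desc.
    have [c Pac cv] := connect_first_step av_desc av.
    by rewrite (P_functional _ _ _ Pab Pac).
  exact: connect_trans (connect1 Pba) av_desc.
have := closed_connect below_v_closed ps; rewrite !inE connect1 //.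
move=> /esym/connect_first_step; rewrite eq_sym => /(_ vs)[c].
by rewrite (negbTE (P_root c)).
Qed.

Lemma search_order_parents_first ord : search_order t s ord -> parents_first P ord.
Proof.
have [P_functional P_root tE] := tP.
case=> [[ord_uniq ord_all] ord_head ord_step] x y; rewrite /prec.
move: {2}(index x ord) (erefl (index x ord)) => i.
elim/ltn_ind: i x y => -[|i] IH x y x_i Pxy.
  have x_s : x = s by rewrite -(nth_index s (ord_all x)) x_i nth0 ord_head.
  by move: (P_root y); rewrite -x_s Pxy.
have i_lt : i.+1 < size ord by rewrite -x_i index_mem.
have [j ji] := ord_step i.+1 i_lt; rewrite -x_i nth_index // tE.
have j_lt : j < size ord by apply: ltn_trans i_lt.
case/orP=> [Pjx | Pxj].
  have := IH j ji _ x (index_uniq s j_lt ord_uniq) Pjx.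
  by rewrite x_i index_uniq // => /(ltn_trans ji); rewrite ltnn.
by rewrite -(P_functional _ _ _ Pxj Pxy) index_uniq // x_i.
Qed.

Lemma ancestor_prec_child ord x p b :
  parents_first P ord -> connect P p x -> P b p -> prec ord x b.
Proof.
move=> first px Pbp; apply: leq_ltn_trans (first _ _ Pbp).
exact: (connect_rank_leq (f := index^~ ord)) px.
Qed.

Lemma dfs_plus_sibling tau sg v w p :
  is_dfs_plus t tau sg -> last s tau = s -> P v p -> P w p -> prec sg v w ->
  index w tau <= index v tau.
Proof.
have [P_functional _ tE] := tP.
move=> plus last_s Pvp Pwp vw.
have first := search_order_parents_first (dfs_plus_search_order plus last_s).
have [[sg_uniq sg_all] sg_head sg_step] := dfs_plus_rooted plus last_s.
have v_pos : 0 < index v sg < size sg.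
  rewrite index_mem sg_all andbT lt0n; apply: contra (parent_neq_root Pvp).
  by move=> /eqP v0; rewrite -(nth_index s (sg_all v)) v0 nth0 sg_head.
have [j [ji tjv _ rightmost]] := sg_step _ v_pos.
rewrite nth_index // in tjv rightmost.
have j_lt : j < size sg by case/andP: v_pos => _; apply: ltn_trans ji.
(* DFS^+ enters v from its parent p, while the child w of p is still unvisited. *)
have j_p : nth s sg j = p.
  move: tjv; rewrite tE => /orP[Pjv | Pvj]; last exact: P_functional _ _ _ Pvj Pvp.
  have := first _ _ Pjv; rewrite /prec index_uniq // => /(ltn_trans ji).
  by rewrite ltnn.
apply: rightmost; first by rewrite j_p tE Pwp orbT.
by rewrite in_take // -leqNgt ltnW.
Qed.
End ParentRelation.

Section DFSLtree.
Variables (V : finType) (e : rel V) (s : V) (sg : seq V).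
Hypotheses (e_sym : symmetric e) (sg_dfs : is_dfs e s sg).
Local Notation L := (Lparent e sg).

Lemma Lparent_functional x y z : L x y -> L x z -> y = z.
Proof.
have [[_ sg_all] _] := sg_dfs.
move=> /and3P[xy ey /forallP maxy] /and3P[xz ez /forallP maxz].
apply: (index_inj x (sg_all y) (sg_all z)); apply/eqP; rewrite eqn_leq.
by rewrite (implyP (maxz y)) ?ey ?(implyP (maxy z)) ?ez.
Qed.

Lemma Lparent_root y : ~~ L s y.
Proof.
have [[sg_uniq sg_all] [sg_head _]] := sg_dfs.
apply/negP => /and3P[]; rewrite /prec.
by case: sg sg_all sg_head => [/(_ s) // | x q _ /= ->]; rewrite eqxx.
Qed.

Lemma Ltree_parent_relation t : t =2 Ltree e sg -> parent_relation t s L.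
Proof.
move=> tE; split=> [x y z | y | x y]; last exact: tE.
  exact: Lparent_functional.
exact: Lparent_root.
Qed.

Lemma dfs_discoverer_Lparent i j :
  i < size sg -> j < i -> e (nth s sg j) (nth s sg i) ->
  (forall k, j < k < i -> all_visited e (take i sg) (nth s sg k)) ->
  L (nth s sg i) (nth s sg j).
Proof.
have [[sg_uniq sg_all] _] := sg_dfs.
move=> i_lt ji eji finished; have j_lt := ltn_trans ji i_lt.
apply/and3P; split; first by rewrite /prec !index_uniq.
  by rewrite e_sym.
apply/forallP => z; apply/implyP => /andP[eiz]; rewrite /prec index_uniq // => zi.
rewrite index_uniq // leqNgt; apply/negP => jz.
have := finished (index z sg); rewrite jz zi nth_index // => /(_ isT (nth s sg i)).
by rewrite e_sym eiz in_take // index_uniq // ltnn => /(_ isT).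
Qed.

Lemma dfs_unrelated_finished i a :
  index a sg < i < size sg -> ~~ connect L (nth s sg i) a ->
  all_visited e (take i sg) a.
Proof.
have [[sg_uniq sg_all] [_ sg_step]] := sg_dfs.
elim/ltn_ind: i a => i IH a /andP[ai i_lt] not_anc.
have /sg_step[j [ji [eji finished]]] : 0 < i < size sg.
  by rewrite i_lt andbT (leq_ltn_trans _ ai).
have not_anc_j : ~~ connect L (nth s sg j) a.
  apply: contra not_anc; apply: connect_trans; apply: connect1.
  exact: dfs_discoverer_Lparent.
case: (ltngtP (index a sg) j) => [aj | ja | aj].
- move=> y eay; have := IH j ji a; rewrite aj (ltn_trans ji i_lt).
  move=> /(_ isT not_anc_j y eay); rewrite !in_take // => /ltn_trans; exact.
- by rewrite -(nth_index s (sg_all a)); apply: finished; rewrite ja.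
- by move: not_anc_j; rewrite -aj nth_index // connect0.
Qed.

Lemma dfs_edge_Lancestor a b : e a b -> prec sg a b -> connect L b a.
Proof.
have [[sg_uniq sg_all] _] := sg_dfs.
move=> eab ab; apply: contraT => not_anc; rewrite /prec in ab.
have := dfs_unrelated_finished (i := index b sg) (a := a).
rewrite ab index_mem sg_all nth_index // => /(_ isT not_anc b eab).
by rewrite in_take // ltnn.
Qed.

Lemma earlier_neighbour_Lancestor ord x a p :
  parents_first L ord -> e x a -> prec ord x a -> L a p -> connect L p x.
Proof.
have [[sg_uniq sg_all] _] := sg_dfs.
move=> first exa xa Lap.
have [xa0 | ax0 | xa0] := ltngtP (index x sg) (index a sg).
- have ax : a != x by rewrite eq_sym (prec_neq xa).
  have [c Lac cx] := connect_first_step (dfs_edge_Lancestor exa xa0) ax.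
  by rewrite (Lparent_functional Lap Lac).
- have eax : e a x by rewrite e_sym.
  have := connect_rank_leq first (dfs_edge_Lancestor eax ax0).
  by rewrite leqNgt -/(prec ord x a) xa.
- by move: (prec_neq xa); rewrite (index_inj x (sg_all x) (sg_all a) xa0) eqxx.
Qed.

Lemma sibling_earlier_neighbour bfs sigma v a b p x :
  parents_first L bfs -> parents_first L sigma -> L v p -> L a p -> L b p ->
  (forall y, prec sigma y v -> e y a = e y b) ->
  e x a && prec bfs x a -> e x b && prec bfs x b.
Proof.
move=> bfs_first sigma_first Lvp Lap Lbp Nab /andP[exa xa].
have px := earlier_neighbour_Lancestor bfs_first exa xa Lap.
rewrite -Nab ?exa ?(ancestor_prec_child bfs_first px Lbp) //.
exact: ancestor_prec_child sigma_first px Lvp.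
Qed.
End DFSLtree.

Section Refinement.
Variable V : finType.
Implicit Types (S : pred V) (Q : seq (seq V)) (e : rel V) (rho bfs : seq V).
Implicit Types (s v w x : V).

Definition same_class v w Q := has (fun q => (v \in q) && (w \in q)) Q.

Lemma perm_refine S Q : perm_eq (flatten (refine S Q)) (flatten Q).
Proof.
elim: Q => //= q Q IH; rewrite /refine /= flatten_cat; apply: perm_cat => //.
by case: ifP => _ /=; rewrite ?cats0 // perm_filterC.
Qed.

Lemma same_class_refine S Q v w :
  S v = S w -> same_class v w Q -> same_class v w (refine S Q).
Proof.
move=> Svw; elim: Q => //= q Q IH; rewrite /refine /= /same_class has_cat.
case/orP=> [/andP[vq wq] | /IH vwQ]; last by apply/orP; right.
case: ifP => _ /=; last by rewrite vq wq.
by rewrite !mem_filter -Svw vq wq; case: (S v).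
Qed.

Lemma perm_foldl_refine (S : V -> pred V) l Q :
  perm_eq (flatten (foldl (fun Q x => refine (S x) Q) Q l)) (flatten Q).
Proof. by elim: l Q => //= x l IH Q; apply: perm_trans (IH _) (perm_refine _ _). Qed.

Lemma same_class_foldl_refine (S : V -> pred V) l Q v w :
  (forall x, S x v = S x w) -> same_class v w Q ->
  same_class v w (foldl (fun Q x => refine (S x) Q) Q l).
Proof. by move=> Svw; elim: l Q => //= x l IH Q vwQ; apply/IH/same_class_refine. Qed.

Definition ordering_partition e bfs : seq (seq V) :=
  foldl (fun Q v => refine (fun w => e v w && prec (rev bfs) w v) Q)
        [:: enum V] (rev bfs).

Lemma same_class_ordering_partition e bfs v w :
  (forall x, e x v && prec (rev bfs) v x = e x w && prec (rev bfs) w x) ->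
  same_class v w (ordering_partition e bfs).
Proof.
move=> Svw; apply: same_class_foldl_refine => //.
by rewrite /same_class /= !mem_enum.
Qed.

Lemma perm_ordering_partition e bfs :
  perm_eq (flatten (ordering_partition e bfs)) (enum V).
Proof. by rewrite -[enum V]cats0; apply: perm_foldl_refine. Qed.

Lemma ordering_tau_last e s rho bfs x : last x (ordering_tau e s rho bfs) = s.
Proof. by rewrite /ordering_tau rev_cons last_rcons. Qed.

Lemma ordering_tau_prec e s rho bfs v w :
  is_vorder rho -> v != s -> w != s -> v != w ->
  same_class v w (ordering_partition e bfs) ->
  index w (ordering_tau e s rho bfs) <= index v (ordering_tau e s rho bfs) ->
  prec rho w v.
Proof.
move=> [rho_uniq rho_all] vs ws vw /hasP[q qQ /andP[vq wq]].
rewrite /ordering_tau -/(ordering_partition e bfs).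
set leT := fun x y => _; set F := flatten _; set ord := s :: _.
have F_perm : perm_eq F (enum V).
  apply: perm_trans (perm_ordering_partition e bfs).
  by apply: perm_flatten_map => q'; rewrite perm_sort.
have F_uniq : uniq F by rewrite (perm_uniq F_perm) enum_uniq.
have F_all x : x \in F by rewrite (perm_mem F_perm) mem_enum.
have ord_uniq : uniq ord by rewrite /= mem_filter eqxx filter_uniq.
have ord_all x : x \in ord by rewrite in_cons mem_filter F_all andbT; case: eqP.
move=> /leq_index_prec; rewrite !mem_rev !ord_all eq_sym => /(_ isT isT vw).
rewrite prec_rev // prec_cons 1?eq_sym // prec_filter //.
rewrite -(subseq_prec F_uniq (subseq_flatten (map_f (sort leT) qQ))) ?mem_sort //.
have leT_trans : transitive leT by move=> y x z xy yz; apply: leq_trans yz xy.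
have leT_total : total leT by move=> x y; apply: leq_total.
move=> /(sorted_ltn_index leT_trans (sort_sorted leT_total q)).
rewrite !mem_sort => /(_ vq wq) le_wv.
by apply: leq_index_prec; rewrite ?rho_all // eq_sym.
Qed.
End Refinement.

Theorem lemma10 (V : finType) (e t : rel V) (s : V) (rho sg : seq V) (v w : V) :
  symmetric e -> irreflexive e -> (forall x y, connect e x y) ->
  is_Ltree_of_DFS e t s ->
  is_vorder rho -> last s rho = s ->
  ordering_output e t s rho sg ->
  prec sg v w ->
  (exists p, tparent t s v p && tparent t s w p) ->
  (forall x, prec sg x v -> e x v = e x w) ->
  prec rho w v.
Proof.
move=> e_sym _ _ [sg0 [sg0_dfs /(Ltree_parent_relation sg0_dfs) tL]] rho_ord _.
move=> [bfs [bfs_T sg_T]] vw [p /andP[tpv tpw]] Nvw.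
have [Lvp Lwp] := (tparent_parent tL tpv, tparent_parent tL tpw).
have tau_last := ordering_tau_last e s rho bfs s.
have bfs_first := search_order_parents_first tL (bfs_search_order bfs_T).
have sg_first := search_order_parents_first tL (dfs_plus_search_order sg_T tau_last).
have [[bfs_uniq bfs_all] _] := bfs_T.
apply: (ordering_tau_prec (e := e) (s := s) (bfs := bfs) rho_ord).
- exact: (parent_neq_root tL Lvp).
- exact: (parent_neq_root tL Lwp).
- exact: prec_neq vw.
- apply: same_class_ordering_partition => x; rewrite !prec_rev //.
  have earlier := sibling_earlier_neighbour e_sym sg0_dfs bfs_first sg_first Lvp.
  by apply/idP/idP; [apply: earlier Lvp Lwp Nvw | apply: earlier Lwp Lvp _ => y /Nvw].
- exact: (dfs_plus_sibling tL sg_T tau_last Lvp Lwp vw).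
Qed.
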